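(* Let $\Gamma$ be a group that is the directed union of a directed family $(\Gamma_i)_{i\in I}$ of subgroups. Let $n \in \mathbb{N}$, suppose $\operatorname{H}^n_b(\Gamma_i;\mathbb{R}) \cong 0$ for all $i \in I$, and suppose there is a finite constant $K$ bounding the $n$-th vanishing moduli of all $\Gamma_i$. Then $\operatorname{H}^n_b(\Gamma;\mathbb{R}) \cong 0$.
   Context: $\operatorname{C}^n_b(G;\mathbb{R}) = \ell^\infty(G^{n+1})^G$ (bounded real functions invariant under the diagonal action) with supremum norm $|\cdot|_\infty$ and homogeneous coboundary $\delta^n_b$; $\operatorname{H}^*_b(G;\mathbb{R})$ is its cohomology. If $\operatorname{H}^n_b(G;\mathbb{R})\cong 0$, the $n$-th vanishing modulus of $G$ is the minimal $K \in \mathbb{R}_{\geq 0}\cup\{\infty\}$ such that for every $c \in \ker \delta^n_b$ there is $b \in \operatorname{C}^{n-1}_b(G;\mathbb{R})$ with $\delta^{n-1}_b(b) = c$ and $|b|_\infty \leq K |c|_\infty$. *)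

From Stdlib Require Import Reals.
From Coquelicot Require Import Coquelicot.
From mathcomp Require Import ssreflect ssrfun ssrbool eqtype ssrnat seq fintype bigop.

Set Implicit Arguments.
Unset Strict Implicit.
Unset Printing Implicit Defensive.

Record group := Group {
  carrier :> Type;
  gmul : carrier -> carrier -> carrier;
  gone : carrier;
  ginv : carrier -> carrier;
  gmulA : forall x y z, gmul x (gmul y z) = gmul (gmul x y) z;
  gmul1 : forall x, gmul gone x = x;
  gmulV : forall x, gmul (ginv x) x = gone
}.

Section BoundedCohomology.
Variable G : group.

Definition is_subgroup (S : G -> Prop) : Prop :=
  S (gone G) /\ (forall x y, S x -> S y -> S (gmul x y)) /\
  (forall x, S x -> S (ginv x)).

Definition in_S (S : G -> Prop) (m : nat) (x : 'I_m -> G) : Prop :=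
  forall k, S (x k).

Definition diag_act (m : nat) (g : G) (x : 'I_m -> G) : 'I_m -> G :=
  fun k => gmul g (x k).

(* Elements of C^n_b(S;R) = l^oo(S^{n+1})^S : real functions on S^{n+1}
   (represented by functions on G^{n+1}, only their values on S^{n+1} matter)
   that are bounded and invariant under the diagonal S-action. *)
Definition is_bcochain (S : G -> Prop) (n : nat) (f : ('I_n.+1 -> G) -> R) : Prop :=
  (exists M : R, forall x, in_S S x -> (Rabs (f x) <= M)%R) /\
  (forall g x, S g -> in_S S x -> f (diag_act g x) = f x).

Definition delta (n : nat) (f : ('I_n.+1 -> G) -> R) : ('I_n.+2 -> G) -> R :=
  fun x => \big[Rplus/0%R]_(j < n.+2)
             (((-1) ^ (nat_of_ord j)) * f (fun k => x (lift j k)))%R.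

Definition is_bcocycle (S : G -> Prop) (n : nat) (c : ('I_n.+1 -> G) -> R) : Prop :=
  forall x, in_S S x -> delta c x = 0%R.

Definition supnorm (S : G -> Prop) (m : nat) (f : ('I_m -> G) -> R) : Rbar :=
  Lub_Rbar (fun r => exists x, in_S S x /\ r = Rabs (f x)).

(* H^n_b(S;R) = 0, with the convention C^{-1}_b = 0
   (so H^0_b = ker delta^0 must be 0). *)
Definition Hb_vanishes (S : G -> Prop) (n : nat) : Prop :=
  forall c : ('I_n.+1 -> G) -> R, is_bcochain S c -> is_bcocycle S c ->
  match n return (('I_n.+1 -> G) -> R) -> Prop with
  | 0 => fun c => forall x, in_S S x -> c x = 0%R
  | k.+1 => fun c => exists b : ('I_k.+1 -> G) -> R,
              is_bcochain S b /\ forall x, in_S S x -> delta b x = c x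
  end c.

(* "The n-th vanishing modulus of S is <= K" : since the vanishing modulus is
   the minimal admissible constant, this says K >= 0 and K is admissible. *)
Definition vanishing_modulus_le (S : G -> Prop) (n : nat) (K : R) : Prop :=
  (0 <= K)%R /\
  forall c : ('I_n.+1 -> G) -> R, is_bcochain S c -> is_bcocycle S c ->
  match n return (('I_n.+1 -> G) -> R) -> Prop with
  | 0 => fun c => forall x, in_S S x -> c x = 0%R  (* b = 0 in C^{-1}_b = 0 *)
  | k.+1 => fun c => exists b : ('I_k.+1 -> G) -> R,
              is_bcochain S b /\ (forall x, in_S S x -> delta b x = c x) /\
              Rbar_le (supnorm S b) (Rbar_mult (Rbar.Finite K) (supnorm S c))
  end c.

End BoundedCohomology.

(* Pick primitives b_i of c on the Gamma_i with |b_i| <= K |c|, and take their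
   pointwise limit along an ultrafilter on I refining the tails of the directed
   system.  Every finite tuple of Gamma eventually lies in Gamma_i, so the limit is
   bounded by K |c|, Gamma-invariant, and (delta being a finite signed sum) a
   primitive of c.  In degree 0 there is nothing to choose: c vanishes on each
   Gamma_i. *)

From Stdlib Require Import Reals Lra.
From Coquelicot Require Import Coquelicot.
From mathcomp Require Import ssreflect ssrfun ssrbool eqtype ssrnat seq fintype bigop.
From mathcomp Require Import ssralg ssrnum interval boolp classical_sets filter.
From mathcomp Require Import topology normedtype Rstruct Rstruct_topology.

Import Num.Theory.

Local Open Scope classical_set_scope.
Local Open Scope R_scope.

Lemma ultra_cvg_bounded {T : Type} {U : set_system T} {UU : UltraFilter U}
    {f : T -> R} {B : R} :
  U (fun t => Rabs (f t) <= B) -> exists a, f @ U --> a /\ Rabs a <= B.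
Proof.
move=> fB.
have fUB : U (f @^-1` `[- B, B]%classic).
  by apply: filterS fB => t /RleP; rewrite /= in_itv /= -ler_norml.
have [a [Ba cla]] := @segment_compact _ (- B) B (f @ U) _ fUB.
exists a; split.
  move=> N Na; have [//|fUNc] := in_ultra_setVsetC (f @^-1` N) UU.
  by have [y [? ?]] := cla (~` N) N fUNc Na.
by move: Ba; rewrite /= in_itv /= -ler_norml => /RleP.
Qed.

Section BoundedCochains.
Context {G : group}.

Lemma is_bcochain_sub {S T : G -> Prop} {n : nat} {c : ('I_n.+1 -> G) -> R} :
  (forall g, S g -> T g) -> is_bcochain T c -> is_bcochain S c.
Proof.
move=> ST [[M cM] c_inv]; have S_T m (x : 'I_m -> G) : in_S S x -> in_S T x.
  by move=> Sx k; apply/ST/Sx.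
split; first by exists M => x /S_T /cM.
by move=> g x /ST Tg /S_T; apply: c_inv.
Qed.

Lemma is_bcocycle_sub {S T : G -> Prop} {n : nat} {c : ('I_n.+1 -> G) -> R} :
  (forall g, S g -> T g) -> is_bcocycle T c -> is_bcocycle S c.
Proof. by move=> ST c_cocycle x Sx; apply: c_cocycle => k; apply/ST/Sx. Qed.

Lemma le_supnorm {S : G -> Prop} {m : nat} (f : ('I_m -> G) -> R) {x : 'I_m -> G} :
  in_S S x -> Rbar_le (Rabs (f x)) (supnorm S f).
Proof. by move=> Sx; apply: (Lub_Rbar_correct _).1; exists x. Qed.

Lemma supnorm_le {S : G -> Prop} {m : nat} {f : ('I_m -> G) -> R} {M : R} :
  (forall x, in_S S x -> Rabs (f x) <= M) -> Rbar_le (supnorm S f) M.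
Proof. by move=> fM; apply: (Lub_Rbar_correct _).2 => _ [x [Sx ->]]; apply: fM. Qed.

Lemma vanishing_modulus_bounded_primitive {S : G -> Prop} {k : nat} {K : R}
    (M : R) (c : ('I_k.+2 -> G) -> R) :
  S (gone G) -> vanishing_modulus_le S k.+1 K ->
  is_bcochain S c -> is_bcocycle S c -> (forall x, in_S S x -> Rabs (c x) <= M) ->
  exists b, is_bcochain S b /\ (forall x, in_S S x -> delta b x = c x) /\
            forall x, in_S S x -> Rabs (b x) <= K * M.
Proof.
move=> S1 [K_ge0 modulus] c_cochain c_cocycle cM.
have [b [b_cochain [db_c b_norm]]] := modulus c c_cochain c_cocycle.
exists b; split=> //; split=> // x Sx.
have c_norm := supnorm_le cM.
(* [S1] rules out [supnorm S c = m_infty], the supremum over an empty set. *)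
have c_norm_ge := @le_supnorm _ _ c (fun=> gone G) (fun=> S1).
have := le_supnorm b Sx.
move: b_norm c_norm c_norm_ge.
case: (supnorm S c) => [s| |] //=; case: (supnorm S b) => [t| |] //= tKs sM.
have := Rabs_pos (c (fun=> gone G)); have := Rabs_pos (b x); nra.
Qed.

Lemma cvg_delta {T : Type} {U : set_system T} {FU : Filter U} {n : nat}
    {f : T -> ('I_n.+1 -> G) -> R} {b : ('I_n.+1 -> G) -> R} :
  (forall y, (fun t => f t y) @ U --> b y) ->
  forall x, (fun t => delta (f t) x) @ U --> delta b x.
Proof.
move=> fb x; apply: (@cvg_big R^o _ Rplus 0 predT (@add_continuous R^o)) => j _.
by apply: cvgMl_tmp; apply: fb.
Qed.

Lemma ultralimit_primitive {S : G -> Prop} {T : Type} {U : set_system T}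
    {UU : UltraFilter U} {n : nat} {c : ('I_n.+2 -> G) -> R}
    {b : T -> ('I_n.+1 -> G) -> R} (M : R) :
  (forall y, U (fun t => Rabs (b t y) <= M)) ->
  (forall g y, S g -> in_S S y -> U (fun t => b t (diag_act g y) = b t y)) ->
  (forall x, in_S S x -> U (fun t => delta (b t) x = c x)) ->
  exists b_lim, is_bcochain S b_lim /\ forall x, in_S S x -> delta b_lim x = c x.
Proof.
move=> bM b_inv db_c.
have [b_lim b_cvg] := choice (fun y => ultra_cvg_bounded (bM y)).
exists b_lim; split; [split|].
- by exists M => y _; case: (b_cvg y).
- move=> g y Sg Sy; apply: (cvg_unique (@Rhausdorff R) (b_cvg (diag_act g y)).1).
  apply: cvg_trans (b_cvg y).1; apply: near_eq_cvg.
  by apply: filterS (b_inv g y Sg Sy) => t ->.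
- move=> x Sx; apply: (cvg_unique (@Rhausdorff R) (cvg_delta (fun y => (b_cvg y).1) x)).
  exact: cvg_near_cst (db_c x Sx).
Qed.

End BoundedCochains.

Section DirectedUnion.
Context {G : group} {I : Type} {Gam : I -> G -> Prop}.
Hypothesis Gam_directed : forall i j, exists k, forall x, Gam i x \/ Gam j x -> Gam k x.
Hypothesis Gam_cover : forall x, exists i, Gam i x.

Lemma directed_union_in_S {m : nat} (x : 'I_m -> G) : exists i, in_S (Gam i) x.
Proof.
suff [i Gam_ix] : exists i, forall k, k \in enum 'I_m -> Gam i (x k).
  by exists i => k; apply/Gam_ix/mem_enum.
elim: (enum 'I_m) => [|k s [i Gam_is]].
  by have [i _] := Gam_cover (gone G); exists i.
have [i' Gam_ixk] := Gam_cover (x k); have [j ij] := Gam_directed i i'.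
exists j => k'; rewrite inE => /orP [/eqP -> | k's]; apply: ij; first by right.
by left; apply: Gam_is.
Qed.

Definition tail_filter : set_system I :=
  filter_from setT (fun i => [set j | forall g, Gam i g -> Gam j g]).

Lemma tail_filter_proper : ProperFilter tail_filter.
Proof.
have [i0 _] := Gam_cover (gone G).
apply: filter_from_proper => [|i _]; last by exists i.
apply: filter_fromT_filter; first by exists i0.
move=> i j; have [k ijk] := Gam_directed i j.
by exists k => l kl; split=> g Gg; apply/kl/ijk; [left|right].
Qed.

Lemma tail_ultrafilter :
  exists U, UltraFilter U /\ forall m (x : 'I_m -> G), U (fun j => in_S (Gam j) x).
Proof.
have [U [UU tail_U]] := ultraFilterLemma tail_filter_proper.
exists U; split=> // m x; have [i Gam_ix] := directed_union_in_S x.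
by apply: tail_U; exists i => // j ij k; apply/ij/Gam_ix.
Qed.

End DirectedUnion.

Theorem proposition4p13 (G : group) (I : Type) (Gam : I -> G -> Prop)
    (n : nat) (K : R) :
  (forall i, is_subgroup (Gam i)) ->
  (forall i j, exists k, forall x, (Gam i x \/ Gam j x) -> Gam k x) ->
  (forall x : G, exists i, Gam i x) ->
  (forall i, Hb_vanishes (Gam i) n) ->
  (forall i, vanishing_modulus_le (Gam i) n K) ->
  Hb_vanishes (fun _ : G => True) n.
Proof.
have Gam_sub_G i : forall g, Gam i g -> True by [].
case: n => [|k] Gam_subgroup Gam_directed Gam_cover Hb_Gam modulus_Gam
  c c_cochain c_cocycle.
  move=> x _; have [i Gam_ix] := directed_union_in_S Gam_directed Gam_cover x.
  exact: Hb_Gam i c (is_bcochain_sub (Gam_sub_G i) c_cochain)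
    (is_bcocycle_sub (Gam_sub_G i) c_cocycle) x Gam_ix.
have [U [UU U_in_S]] := tail_ultrafilter Gam_directed Gam_cover.
have [M cM] := c_cochain.1.
have [b b_prim] := choice (fun i =>
  vanishing_modulus_bounded_primitive M c (Gam_subgroup i).1 (modulus_Gam i)
    (is_bcochain_sub (Gam_sub_G i) c_cochain)
    (is_bcocycle_sub (Gam_sub_G i) c_cocycle) (fun x _ => cM x (fun=> Logic.I))).
apply: (ultralimit_primitive (b := b) (K * M)) => [y|g y _ _|x _].
- by apply: filterS (U_in_S _ y) => i /(b_prim i).2.2.
- apply: filterS (filterI (U_in_S 1%N (fun=> g)) (U_in_S _ y)) => i [Gam_ig Gam_iy].
  exact: (b_prim i).1.2 g y (Gam_ig ord0) Gam_iy.
- by apply: filterS (U_in_S _ x) => i /(b_prim i).2.1.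
Qed.
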